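(* Let $k\in\mathbb{N}$. For every $\mathbf{f}=(f_1,f_2)\in (C^\infty[-1,1])^2$, \[ \operatorname{Re}\langle\tilde{\mathbf{L}}_\square\mathbf{f},\mathbf{f}\rangle_k\le-\frac12\|\mathbf{f}\|_k^2, \] where $\tilde{\mathbf{L}}_\square\mathbf{f}=\big(f_2-yf_1'-f_1(-1),\ -f_2-yf_2'+f_1''\big)$.
   Context: Sesquilinear forms on pairs of functions on $[-1,1]$: $\langle\mathbf{f},\mathbf{g}\rangle_0:=f_1(-1)\overline{g_1(-1)}+\langle f_1,g_1\rangle_{\dot H^1(-1,1)}+\langle f_2,g_2\rangle_{L^2(-1,1)}$ and $\langle\mathbf{f},\mathbf{g}\rangle_k:=\langle\mathbf{f},\mathbf{g}\rangle_0+\langle f_1,g_1\rangle_{\dot H^{k+1}(-1,1)}+\langle f_2,g_2\rangle_{\dot H^k(-1,1)}$, with $\|\mathbf{f}\|_k^2=\langle\mathbf{f},\mathbf{f}\rangle_k$. Here $f_1(-1)$ in the first component of $\tilde{\mathbf{L}}_\square\mathbf{f}$ denotes the constant function. *)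

From Stdlib Require Import Reals.
From Coquelicot Require Import Coquelicot.
Open Scope R_scope.

(* Complex-valued functions of a real variable (only their values on [-1,1] matter). *)
Definition cfun := R -> C.

Definition cDn (n : nat) (f : cfun) : cfun :=
  fun x => (Derive_n (fun t => fst (f t)) n x, Derive_n (fun t => snd (f t)) n x).

Definition csmooth (f : cfun) : Prop :=
  forall (n : nat) (x : R),
    ex_derive_n (fun t => fst (f t)) n x /\ ex_derive_n (fun t => snd (f t)) n x.

Definition L2ip (f g : cfun) : C :=
  @RInt C_R_CompleteNormedModule (fun x => Cmult (f x) (Cconj (g x))) (-1) 1.

Definition Hdotip (m : nat) (f g : cfun) : C := L2ip (cDn m f) (cDn m g).

Definition cfun2 := (cfun * cfun)%type.

Definition ip0 (f g : cfun2) : C :=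
  Cplus (Cplus (Cmult (fst f (-1)) (Cconj (fst g (-1))))
               (Hdotip 1 (fst f) (fst g)))
        (L2ip (snd f) (snd g)).

Definition ipk (k : nat) (f g : cfun2) : C :=
  Cplus (Cplus (ip0 f g) (Hdotip (S k) (fst f) (fst g))) (Hdotip k (snd f) (snd g)).

(* ||f||_k^2 = <f,f>_k (a real number; we take its real part). *)
Definition normk2 (k : nat) (f : cfun2) : R := fst (ipk k f f).

Definition Lsq (f : cfun2) : cfun2 :=
  (fun y => Cminus (Cminus (snd f y) (Cmult (RtoC y) (cDn 1 (fst f) y))) (fst f (-1)),
   fun y => Cplus (Cminus (Copp (snd f y)) (Cmult (RtoC y) (cDn 1 (snd f) y)))
                  (cDn 2 (fst f) y)).

From Stdlib Require Import Reals Lra Psatz FunctionalExtensionality.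
From Coquelicot Require Import Coquelicot.
Open Scope R_scope.
Set Bullet Behavior "Strict Subproofs".

(* Both components of L = Lsq have real coefficients, so Re <L f, f>_k is the sum of the same real
   quantity for the real and for the imaginary part of f, and it suffices to treat a real pair
   f = (a, c).  Put P = a^(m+1) and Q = c^(m).  Since (y a')^(m) = y a^(m+1) + m a^(m), the
   order-m terms of L f are Q' - y P' - (m+1) P and P' - y Q' - (m+1) Q, and the integrand of
   their pairing with (P, Q) is  d/dy [P Q - y (P^2 + Q^2) / 2] - (m + 1/2) (P^2 + Q^2).
   Hence the order-m part of the form is
     -(m + 1/2) \int (P^2 + Q^2) - (P(1) - Q(1))^2 / 2 - (P(-1) + Q(-1))^2 / 2.
   Use this for m = 0 and m = k; the point term a(-1) (a'(-1) + c(-1) - a(-1)) combines with the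
   boundary term -(a'(-1) + c(-1))^2 / 2 of order 0 into
   -a(-1)^2 / 2 - (a(-1) - a'(-1) - c(-1))^2 / 2. *)

Lemma continuous_Rplus (f g : R -> R) x :
  continuous f x -> continuous g x -> continuous (fun t => f t + g t) x.
Proof. exact (continuous_plus f g x). Qed.

Lemma continuous_Ropp (f : R -> R) x : continuous f x -> continuous (fun t => - f t) x.
Proof. exact (continuous_opp f x). Qed.

Lemma continuous_Rmult (f g : R -> R) x :
  continuous f x -> continuous g x -> continuous (fun t => f t * g t) x.
Proof. exact (continuous_mult f g x). Qed.

Lemma continuous_Rminus (f g : R -> R) x :
  continuous f x -> continuous g x -> continuous (fun t => f t - g t) x.
Proof. exact (continuous_minus f g x). Qed.

Ltac solve_continuous :=
  repeat match goal with
  | |- continuous (fun t => @?f t * @?g t) _ => apply continuous_Rmult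
  | |- continuous (fun t => @?f t + @?g t) _ => apply continuous_Rplus
  | |- continuous (fun t => @?f t - @?g t) _ => apply continuous_Rminus
  | |- continuous (fun t => - @?f t) _ => apply continuous_Ropp
  | |- continuous (fun t => t) _ => apply continuous_id
  | |- continuous (fun _ => _) _ => apply continuous_const
  | H : forall x, continuous ?f x |- continuous ?f _ => apply H
  end.

Lemma ex_RInt_continuous_R (f : R -> R) a b : (forall x, continuous f x) -> ex_RInt f a b.
Proof. intros Hf. apply (@ex_RInt_continuous R_CompleteNormedModule). intros z _. apply Hf. Qed.

Definition smooth (h : R -> R) : Prop := forall n x, ex_derive_n h n x.

Section Smooth.

Variable h : R -> R.
Hypothesis Hh : smooth h.

Lemma smooth_ex_derive n x : ex_derive (Derive_n h n) x.
Proof. exact (Hh (S n) x). Qed.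

Lemma smooth_is_derive n x : is_derive (Derive_n h n) x (Derive_n h (S n) x).
Proof. exact (Derive_correct _ _ (smooth_ex_derive n x)). Qed.

Lemma smooth_continuous n x : continuous (Derive_n h n) x.
Proof. exact (ex_derive_continuous _ _ (smooth_ex_derive n x)). Qed.

Lemma continuous_of_smooth x : continuous h x.
Proof. exact (smooth_continuous 0 x). Qed.

Lemma smooth_near n x :
  locally x (fun y : R => forall k, (k <= n)%nat -> ex_derive_n h k y).
Proof. apply filter_forall. intros y k _. apply Hh. Qed.

Lemma smooth_Derive_n m : smooth (Derive_n h m).
Proof.
  intros [|n] x; [exact I|].
  apply ex_derive_ext with (Derive_n h (n + m)).
  - intros t. symmetry. apply Derive_n_comp.
  - apply smooth_ex_derive.
Qed.

Lemma Derive_n_id_mul_Derive n x :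
  Derive_n (fun t => t * Derive_n h 1 t) n x
  = x * Derive_n h (S n) x + INR n * Derive_n h n x.
Proof.
  revert x; induction n as [|n IH]; intros x; [simpl; ring|].
  change (Derive (Derive_n (fun t => t * Derive_n h 1 t) n) x
          = x * Derive (Derive_n h (S n)) x + INR (S n) * Derive_n h (S n) x).
  rewrite (Derive_ext _ _ x IH), Derive_plus, Derive_mult, Derive_scal.
  - change (Derive (fun t => t) x) with (Derive id x).
    rewrite Derive_id, S_INR. change (Derive (Derive_n h n) x) with (Derive_n h (S n) x). ring.
  - apply ex_derive_id.
  - apply smooth_ex_derive.
  - apply ex_derive_mult; [apply ex_derive_id | apply smooth_ex_derive].
  - apply ex_derive_scal, smooth_ex_derive.
Qed.

Lemma smooth_id_mul_Derive : smooth (fun t => t * Derive_n h 1 t).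
Proof.
  intros [|n] x; [exact I|].
  apply ex_derive_ext with (fun t => t * Derive_n h (S n) t + INR n * Derive_n h n t).
  - intros t. symmetry. apply Derive_n_id_mul_Derive.
  - auto_derive. exact (conj (smooth_ex_derive (S n) x) (conj (smooth_ex_derive n x) I)).
Qed.

End Smooth.

Lemma smooth_plus f g : smooth f -> smooth g -> smooth (fun t => f t + g t).
Proof. intros Hf Hg n x. apply ex_derive_n_plus; apply smooth_near; assumption. Qed.

Lemma smooth_minus f g : smooth f -> smooth g -> smooth (fun t => f t - g t).
Proof. intros Hf Hg n x. apply ex_derive_n_minus; apply smooth_near; assumption. Qed.

Lemma smooth_opp f : smooth f -> smooth (fun t => - f t).
Proof. intros Hf n x. apply ex_derive_n_opp, Hf. Qed.

Lemma smooth_const c : smooth (fun _ => c).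
Proof. intros n x. apply ex_derive_n_const. Qed.

Definition rfun2 := ((R -> R) * (R -> R))%type.

Definition smooth_pair (f : rfun2) : Prop := smooth (fst f) /\ smooth (snd f).

Definition Lsq_real (f : rfun2) : rfun2 :=
  (fun y => snd f y - y * Derive_n (fst f) 1 y - fst f (-1),
   fun y => - snd f y - y * Derive_n (snd f) 1 y + Derive_n (fst f) 2 y).

Lemma smooth_pair_Lsq_real f : smooth_pair f -> smooth_pair (Lsq_real f).
Proof.
  destruct f as [a c]; intros [Ha Hc]; split; cbn [fst snd] in *.
  - apply smooth_minus; [apply smooth_minus | apply smooth_const].
    + exact Hc.
    + apply smooth_id_mul_Derive, Ha.
  - apply smooth_plus; [apply smooth_minus | apply smooth_Derive_n, Ha].
    + apply smooth_opp, Hc.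
    + apply smooth_id_mul_Derive, Hc.
Qed.

Lemma Derive_n_Lsq_real_fst f m : smooth_pair f ->
  Derive_n (fst (Lsq_real f)) (S m)
  = fun x => Derive_n (snd f) (S m) x - x * Derive_n (fst f) (S (S m)) x
             - (INR m + 1) * Derive_n (fst f) (S m) x.
Proof.
  destruct f as [a c]; intros [Ha Hc]; unfold Lsq_real; cbn [fst snd] in *. extensionality x.
  rewrite Derive_n_minus, Derive_n_const, Derive_n_minus, Derive_n_id_mul_Derive, S_INR.
  - ring.
  - exact Ha.
  - apply smooth_near, Hc.
  - apply smooth_near, smooth_id_mul_Derive, Ha.
  - apply smooth_near, smooth_minus; [exact Hc | apply smooth_id_mul_Derive, Ha].
  - apply smooth_near, smooth_const.
Qed.

Lemma Derive_n_Lsq_real_snd f m : smooth_pair f ->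
  Derive_n (snd (Lsq_real f)) m
  = fun x => Derive_n (fst f) (S (S m)) x - x * Derive_n (snd f) (S m) x
             - (INR m + 1) * Derive_n (snd f) m x.
Proof.
  destruct f as [a c]; intros [Ha Hc]; unfold Lsq_real; cbn [fst snd] in *. extensionality x.
  rewrite Derive_n_plus, Derive_n_minus, Derive_n_opp, Derive_n_id_mul_Derive, Derive_n_comp.
  - rewrite Nat.add_comm. simpl. ring.
  - exact Hc.
  - apply smooth_near, smooth_opp, Hc.
  - apply smooth_near, smooth_id_mul_Derive, Hc.
  - apply smooth_near, smooth_minus; [apply smooth_opp, Hc | apply smooth_id_mul_Derive, Hc].
  - apply smooth_near, smooth_Derive_n, Ha.
Qed.

Definition L2ip_real (F G : R -> R) : R := RInt (fun x => F x * G x) (-1) 1.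

Lemma is_RInt_L2ip_real F G : (forall x, continuous F x) -> (forall x, continuous G x) ->
  is_RInt (fun t => F t * G t) (-1) 1 (L2ip_real F G).
Proof.
  intros HF HG. apply (RInt_correct (V := R_CompleteNormedModule)), ex_RInt_continuous_R.
  intros x. solve_continuous.
Qed.

Lemma L2ip_real_self_ge0 F : (forall x, continuous F x) -> 0 <= L2ip_real F F.
Proof.
  intros HF. apply RInt_ge_0; [lra | |].
  - apply ex_RInt_continuous_R. intros x. solve_continuous.
  - intros x _. apply Rle_0_sqr.
Qed.

Lemma energy_identity (K : R) (P Q dP dQ : R -> R) :
  (forall x, is_derive P x (dP x)) -> (forall x, is_derive Q x (dQ x)) ->
  (forall x, continuous dP x) -> (forall x, continuous dQ x) ->
  L2ip_real (fun t => dQ t - t * dP t - (K + 1) * P t) P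
  + L2ip_real (fun t => dP t - t * dQ t - (K + 1) * Q t) Q
  = - (K + 1 / 2) * (L2ip_real P P + L2ip_real Q Q)
    - (P 1 - Q 1) ^ 2 / 2 - (P (-1) + Q (-1)) ^ 2 / 2.
Proof.
  intros HP HQ HdP HdQ.
  assert (eP : forall x, ex_derive P x) by (intros x; exists (dP x); apply HP).
  assert (eQ : forall x, ex_derive Q x) by (intros x; exists (dQ x); apply HQ).
  assert (cP : forall x, continuous P x) by (intros x; exact (ex_derive_continuous P x (eP x))).
  assert (cQ : forall x, continuous Q x) by (intros x; exact (ex_derive_continuous Q x (eQ x))).
  set (A := fun t => dQ t - t * dP t - (K + 1) * P t).
  set (A' := fun t => dP t - t * dQ t - (K + 1) * Q t).
  assert (cA : forall x, continuous A x) by (intros x; unfold A; solve_continuous).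
  assert (cA' : forall x, continuous A' x) by (intros x; unfold A'; solve_continuous).
  set (B := fun t => P t * Q t - 1 / 2 * t * (P t * P t + Q t * Q t)).
  set (dB := fun t => dP t * Q t + P t * dQ t - 1 / 2 * (P t * P t + Q t * Q t)
                      - t * (P t * dP t + Q t * dQ t)).
  assert (FTC : is_RInt dB (-1) 1 (B 1 - B (-1))).
  { apply (@is_RInt_derive R_CompleteNormedModule B dB).
    - intros x _. unfold B, dB. auto_derive.
      + repeat apply conj; auto.
      + replace (Derive (fun y => P y) x) with (dP x) by (symmetry; apply is_derive_unique, HP).
        replace (Derive (fun y => Q y) x) with (dQ x) by (symmetry; apply is_derive_unique, HQ).
        field.
    - intros x _. unfold dB. solve_continuous. }
  pose proof (is_RInt_plus _ _ _ _ _ _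
    (is_RInt_L2ip_real A P cA cP) (is_RInt_L2ip_real A' Q cA' cQ)) as Hsum.
  pose proof (is_RInt_plus _ _ _ _ _ _ FTC (is_RInt_scal _ _ _ (- (K + 1 / 2)) _
    (is_RInt_plus _ _ _ _ _ _ (is_RInt_L2ip_real P P cP cP) (is_RInt_L2ip_real Q Q cQ cQ))))
    as Hrhs.
  rewrite <- (is_RInt_unique _ _ _ _ Hsum : RInt _ (-1) 1 = L2ip_real A P + L2ip_real A' Q).
  apply is_RInt_unique.
  replace (- (K + 1 / 2) * (L2ip_real P P + L2ip_real Q Q) - (P 1 - Q 1) ^ 2 / 2
           - (P (-1) + Q (-1)) ^ 2 / 2)
    with (plus (B 1 - B (-1)) (scal (- (K + 1 / 2)) (plus (L2ip_real P P) (L2ip_real Q Q))))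
    by (unfold B, plus, scal; simpl; unfold mult; simpl; field).
  refine (is_RInt_ext _ _ _ _ _ _ Hrhs).
  intros x _. unfold A, A', dB, plus, scal; simpl; unfold mult; simpl. field.
Qed.

Lemma Lsq_real_energy f m : smooth_pair f ->
  L2ip_real (Derive_n (fst (Lsq_real f)) (S m)) (Derive_n (fst f) (S m))
  + L2ip_real (Derive_n (snd (Lsq_real f)) m) (Derive_n (snd f) m)
  = - (INR m + 1 / 2) * (L2ip_real (Derive_n (fst f) (S m)) (Derive_n (fst f) (S m))
                         + L2ip_real (Derive_n (snd f) m) (Derive_n (snd f) m))
    - (Derive_n (fst f) (S m) 1 - Derive_n (snd f) m 1) ^ 2 / 2
    - (Derive_n (fst f) (S m) (-1) + Derive_n (snd f) m (-1)) ^ 2 / 2.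
Proof.
  intros Hf.
  rewrite Derive_n_Lsq_real_fst, Derive_n_Lsq_real_snd by exact Hf.
  destruct Hf as [Ha Hc].
  apply energy_identity; intros x.
  - apply smooth_is_derive, Ha.
  - apply smooth_is_derive, Hc.
  - apply smooth_continuous, Ha.
  - apply smooth_continuous, Hc.
Qed.

Definition ipk_real (k : nat) (f g : rfun2) : R :=
  fst f (-1) * fst g (-1)
  + L2ip_real (Derive_n (fst f) 1) (Derive_n (fst g) 1)
  + L2ip_real (snd f) (snd g)
  + L2ip_real (Derive_n (fst f) (S k)) (Derive_n (fst g) (S k))
  + L2ip_real (Derive_n (snd f) k) (Derive_n (snd g) k).

Lemma ipk_real_Lsq_real_le k f : smooth_pair f ->
  ipk_real k (Lsq_real f) f <= - (1 / 2) * ipk_real k f f.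
Proof.
  intros Hf.
  pose proof (Lsq_real_energy f 0 Hf) as E0.
  pose proof (Lsq_real_energy f k Hf) as Ek.
  destruct f as [a c]; destruct Hf as [Ha Hc]; cbn [fst snd] in *.
  assert (Nk : 0 <= INR k * (L2ip_real (Derive_n a (S k)) (Derive_n a (S k))
                            + L2ip_real (Derive_n c k) (Derive_n c k))).
  { apply Rmult_le_pos; [apply pos_INR |].
    apply Rplus_le_le_0_compat; apply L2ip_real_self_ge0; intros x; apply smooth_continuous;
      assumption. }
  unfold ipk_real. cbn [fst snd].
  change (fst (Lsq_real (a, c)) (-1)) with (c (-1) - (-1) * Derive_n a 1 (-1) - a (-1)).
  change (Derive_n (snd (Lsq_real (a, c))) 0) with (snd (Lsq_real (a, c))) in E0.
  change (Derive_n c 0) with c in E0. change (INR 0) with 0 in E0.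
  pose proof (pow2_ge_0 (Derive_n a 1 1 - c 1)).
  pose proof (pow2_ge_0 (Derive_n a (S k) 1 - Derive_n c k 1)).
  pose proof (pow2_ge_0 (Derive_n a (S k) (-1) + Derive_n c k (-1))).
  pose proof (pow2_ge_0 (a (-1) - Derive_n a 1 (-1) - c (-1))).
  nra.
Qed.

Lemma Re_RInt (h : R -> C) a b :
  ex_RInt (fun t => Re (h t)) a b -> ex_RInt (fun t => Im (h t)) a b ->
  Re (@RInt C_R_CompleteNormedModule h a b) = RInt (fun t => Re (h t)) a b.
Proof.
  intros [l1 H1] [l2 H2].
  rewrite (@is_RInt_unique C_R_CompleteNormedModule _ _ _ _
             (@is_RInt_fct_extend_pair R_NormedModule R_NormedModule h a b l1 l2 H1 H2)).
  symmetry. now apply is_RInt_unique.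
Qed.

Lemma Re_L2ip (F G : cfun) :
  (forall x, continuous (fun t => Re (F t)) x) -> (forall x, continuous (fun t => Im (F t)) x) ->
  (forall x, continuous (fun t => Re (G t)) x) -> (forall x, continuous (fun t => Im (G t)) x) ->
  Re (L2ip F G) = L2ip_real (fun t => Re (F t)) (fun t => Re (G t))
                  + L2ip_real (fun t => Im (F t)) (fun t => Im (G t)).
Proof.
  intros HF1 HF2 HG1 HG2. unfold L2ip.
  rewrite Re_RInt by (apply ex_RInt_continuous_R; intros x; simpl; solve_continuous).
  apply is_RInt_unique.
  refine (is_RInt_ext _ _ _ _ _ _ (is_RInt_plus _ _ _ _ _ _
            (is_RInt_L2ip_real _ _ HF1 HG1) (is_RInt_L2ip_real _ _ HF2 HG2))).
  intros x _. unfold plus, Re, Im; simpl. ring.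
Qed.

Definition Re2 (f : cfun2) : rfun2 := (fun t => Re (fst f t), fun t => Re (snd f t)).
Definition Im2 (f : cfun2) : rfun2 := (fun t => Im (fst f t), fun t => Im (snd f t)).

Lemma Re_Hdotip m u w :
  smooth (fun t => Re (u t)) -> smooth (fun t => Im (u t)) ->
  smooth (fun t => Re (w t)) -> smooth (fun t => Im (w t)) ->
  Re (Hdotip m u w)
  = L2ip_real (Derive_n (fun t => Re (u t)) m) (Derive_n (fun t => Re (w t)) m)
    + L2ip_real (Derive_n (fun t => Im (u t)) m) (Derive_n (fun t => Im (w t)) m).
Proof.
  intros Hu1 Hu2 Hw1 Hw2.
  apply Re_L2ip; intros x.
  - exact (smooth_continuous _ Hu1 m x).
  - exact (smooth_continuous _ Hu2 m x).
  - exact (smooth_continuous _ Hw1 m x).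
  - exact (smooth_continuous _ Hw2 m x).
Qed.

Lemma Re_ipk k F G :
  smooth_pair (Re2 F) -> smooth_pair (Im2 F) -> smooth_pair (Re2 G) -> smooth_pair (Im2 G) ->
  Re (ipk k F G) = ipk_real k (Re2 F) (Re2 G) + ipk_real k (Im2 F) (Im2 G).
Proof.
  intros [HF1 HF2] [HF3 HF4] [HG1 HG2] [HG3 HG4]. cbn [fst snd Re2 Im2] in *.
  unfold ipk, ip0.
  rewrite !re_plus, re_mult, re_conj, im_conj, !Re_Hdotip, Re_L2ip
    by first [assumption | intros x; apply continuous_of_smooth; assumption].
  unfold ipk_real, Re2, Im2. cbn [fst snd]. ring.
Qed.

Lemma Re2_Lsq f : Re2 (Lsq f) = Lsq_real (Re2 f).
Proof.
  unfold Re2, Lsq, Lsq_real, cDn, Re. cbn [fst snd].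
  f_equal; extensionality y; simpl; ring.
Qed.

Lemma Im2_Lsq f : Im2 (Lsq f) = Lsq_real (Im2 f).
Proof.
  unfold Im2, Lsq, Lsq_real, cDn, Im. cbn [fst snd].
  f_equal; extensionality y; simpl; ring.
Qed.

Theorem lemma5p2 (k : nat) (f : cfun2) :
  csmooth (fst f) -> csmooth (snd f) ->
  Re (ipk k (Lsq f) f) <= - (1 / 2) * normk2 k f.
Proof.
  intros Hu Hv.
  assert (Hre : smooth_pair (Re2 f)) by (split; intros n x; [apply Hu | apply Hv]).
  assert (Him : smooth_pair (Im2 f)) by (split; intros n x; [apply Hu | apply Hv]).
  assert (HLre : smooth_pair (Re2 (Lsq f)))
    by (rewrite Re2_Lsq; apply smooth_pair_Lsq_real, Hre).
  assert (HLim : smooth_pair (Im2 (Lsq f)))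
    by (rewrite Im2_Lsq; apply smooth_pair_Lsq_real, Him).
  unfold normk2. change (fst (ipk k f f)) with (Re (ipk k f f)).
  rewrite !Re_ipk, Re2_Lsq, Im2_Lsq by assumption.
  pose proof (ipk_real_Lsq_real_le k _ Hre).
  pose proof (ipk_real_Lsq_real_le k _ Him).
  lra.
Qed.
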